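(* Let $\mu$ be the Cauchy distribution $d\mu(x)=\frac1\pi\frac{dx}{1+x^2}$, $\alpha\ge0$, $\beta>0$, $s=\alpha+\beta$. For $u_0\in\mathbb R$ let $u=f_{\alpha,\beta}(u_0)$ and $v=v_s(u_0)$. Then, regarding $u_0$ (and hence $v$) as a function of $u$, \[\frac{d}{du}\int\frac{(u_0-x)\,d\mu(x)}{(u_0-x)^2+v^2}=\frac{v(-s+2v(1+v)^2)}{(1+v)(s^2+4\alpha v^2(1+v))-(\alpha-\beta)sv}.\]
   Context: $v_s(u)=\inf\{v>0:\int\frac{d\mu(x)}{(u-x)^2+v^2}\le\frac1s\}$; $f_{\alpha,\beta}(u_0)=u_0+(\alpha-\beta)\int\frac{(u_0-x)\,d\mu(x)}{(u_0-x)^2+v_s(u_0)^2}$, a strictly increasing homeomorphism of $\mathbb R$. *)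

From Stdlib Require Import Reals.
From Coquelicot Require Import Coquelicot.
Open Scope R_scope.

Definition cauchy_density (x : R) : R := / (PI * (1 + x ^ 2)).

Definition mu_int (g : R -> R) : R :=
  RInt_gen (fun x => g x * cauchy_density x)
           (Rbar_locally m_infty) (Rbar_locally p_infty).

Definition v_s (s u : R) : R :=
  real (Glb_Rbar (fun v => 0 < v /\
          mu_int (fun x => / ((u - x) ^ 2 + v ^ 2)) <= / s)).

Definition G_int (u0 v : R) : R :=
  mu_int (fun x => (u0 - x) / ((u0 - x) ^ 2 + v ^ 2)).

Definition f_ab (alpha beta u0 : R) : R :=
  u0 + (alpha - beta) * G_int u0 (v_s (alpha + beta) u0).

From Stdlib Require Import Reals Lra Ranalysis5.
From Coquelicot Require Import Coquelicot.
Open Scope R_scope.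

(* Both integrals against the Cauchy law are explicit, the Cauchy law being the Poisson kernel
   at height 1: for [v > 0]
     int dmu(x) / ((u-x)^2 + v^2) = (1+v) / (v (u^2 + (1+v)^2)),
     int (u-x) dmu(x) / ((u-x)^2 + v^2) = u / (u^2 + (1+v)^2),
   which we obtain by partial fractions and an explicit primitive.  Hence [v_s u] is the positive
   root of the cubic [v (u^2 + (1+v)^2) = s (1+v)] and [f(u) = u + (alpha-beta) G(u)] with
   [G(u) = u / (u^2 + (1 + v_s u)^2)].  Subtracting the cubic at two points gives [v_s'], hence
   [G'] as a rational function of [v] alone; [f' = 1 + (alpha-beta) G'] is positive and
   [|f(u) - u| <= |alpha-beta|/2], so [f] is an increasing bijection and the derivative in the
   statement is [G'/f'] by the inverse function rule. *)

Lemma filterlim_p_infty_inv (F g : R -> R) (M : R) :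
  (forall x, M < x -> F x = g (/ x)) -> continuous g 0 ->
  filterlim F (Rbar_locally p_infty) (locally (g 0)).
Proof.
intros HF Hg.
apply filterlim_ext_loc with (fun x => g (/ x)).
- exists M; intros x Hx; symmetry; exact (HF x Hx).
- apply filterlim_comp with (2 := Hg).
  apply (is_lim_inv (fun y => y) p_infty p_infty); [apply is_lim_id | discriminate].
Qed.

Lemma filterlim_m_infty_inv (F g : R -> R) (M : R) :
  (forall x, x < M -> F x = g (/ x)) -> continuous g 0 ->
  filterlim F (Rbar_locally m_infty) (locally (g 0)).
Proof.
intros HF Hg.
apply filterlim_ext_loc with (fun x => g (/ x)).
- exists M; intros x Hx; symmetry; exact (HF x Hx).
- apply filterlim_comp with (2 := Hg).
  apply (is_lim_inv (fun y => y) m_infty m_infty); [apply is_lim_id | discriminate].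
Qed.

Lemma atan_inv_neg x : x < 0 -> atan x = - (PI / 2) - atan (/ x).
Proof.
intros hx.
assert (H := atan_inv (- x) ltac:(lra)).
rewrite Rinv_opp, !atan_opp in H; lra.
Qed.

Lemma one_add_pow2_pos x : 0 < 1 + x ^ 2.
Proof. pose proof (pow2_ge_0 x); lra. Qed.

Lemma pow2_add_pos x y : 0 < y -> 0 < x ^ 2 + y ^ 2.
Proof. intros hy; pose proof (pow2_ge_0 x); pose proof (pow2_gt_0 y); lra. Qed.

Lemma atan_inv_pos x : 0 < x -> atan x = PI / 2 - atan (/ x).
Proof. intros hx; rewrite (atan_inv x hx); ring. Qed.

Lemma continuity_pt_of_abs_le (f h : R -> R) x0 :
  (forall x, Rabs (f x - f x0) <= h x) -> continuity_pt h x0 -> h x0 = 0 ->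
  continuity_pt f x0.
Proof.
intros Hf Hh H0 eps heps.
destruct (Hh eps heps) as [d [hd Hd]]; exists d; split; [exact hd |].
intros x Hx; specialize (Hd x Hx); simpl in *; unfold R_dist in *.
rewrite H0, Rminus_0_r in Hd.
apply Rle_lt_trans with (2 := Hd), Rle_trans with (2 := Rle_abs _), Hf.
Qed.

Lemma is_derive_of_slope (f q : R -> R) x0 :
  (forall x, f x - f x0 = (x - x0) * q x) -> continuity_pt q x0 -> is_derive f x0 (q x0).
Proof.
intros Hf Hq; apply is_derive_Reals.
intros eps heps; destruct (Hq eps heps) as [d [hd Hd]].
exists (mkposreal d hd); intros h hh0 hh.
replace ((f (x0 + h) - f x0) / h) with (q (x0 + h)) by (rewrite Hf; field; exact hh0).
apply Hd; split.
- split; [exact I | lra].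
- simpl; unfold R_dist; replace (x0 + h - x0) with h by ring; exact hh.
Qed.

Lemma is_derive_inverse (f g df : R -> R) y :
  (forall x, is_derive f x (df x)) -> (forall x x', x < x' -> f x < f x') ->
  (forall y', f (g y') = y') -> df (g y) <> 0 -> is_derive g y (/ df (g y)).
Proof.
intros Hf Hincr Hfg Hdf.
assert (Hmono : forall y1 y2, y1 <= y2 -> g y1 <= g y2).
{ intros y1 y2 H12; destruct (Rle_lt_dec (g y1) (g y2)) as [| Hlt]; [assumption |].
  apply Hincr in Hlt; rewrite !Hfg in Hlt; lra. }
assert (Hgf : forall x, g (f x) = x).
{ intros x; apply Rle_antisym.
  - destruct (Rle_lt_dec (g (f x)) x) as [| Hlt]; [assumption |].
    apply Hincr in Hlt; rewrite Hfg in Hlt; lra.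
  - destruct (Rle_lt_dec x (g (f x))) as [| Hlt]; [assumption |].
    apply Hincr in Hlt; rewrite Hfg in Hlt; lra. }
assert (Hcont : continuity_pt g y).
{ assert (Hlo : f (g y - 1) < y) by (rewrite <- (Hfg y) at 2; apply Hincr; lra).
  assert (Hhi : y < f (g y + 1)) by (rewrite <- (Hfg y) at 1; apply Hincr; lra).
  apply (continuity_pt_recip_interv f g (g y - 1) (g y + 1)); try lra.
  - intros x x' _ Hxx' _; apply Hincr, Hxx'.
  - intros x _ _; apply Hfg.
  - intros x Hx1 Hx2.
    apply Hmono in Hx1, Hx2; rewrite Hgf in Hx1, Hx2; lra.
  - intros a _; apply continuity_pt_filterlim.
    apply (@ex_derive_continuous R_AbsRing R_NormedModule); eexists; apply Hf.
}
assert (Prf : forall x, g (y - 1) <= x <= g (y + 1) -> derivable_pt f x)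
  by (intros x _; apply ex_derive_Reals_0; eexists; apply Hf).
assert (Prg : g (y - 1) <= g y <= g (y + 1)) by (split; apply Hmono; lra).
assert (Hdf' : derive_pt f (g y) (Prf (g y) Prg) = df (g y))
  by (apply derive_pt_eq_0, is_derive_Reals, Hf).
apply is_derive_Reals; rewrite <- Hdf', <- Rdiv_1_l.
apply (derivable_pt_lim_recip_interv f g (y - 1) (y + 1) y Prf Hcont);
  try lra; intros x _; apply Hfg.
Qed.

Lemma preimage_of_bounded_shift (f : R -> R) C : continuity f ->
  (forall x, Rabs (f x - x) <= C) -> forall y, { x | f x = y }.
Proof.
intros Hf HC y.
assert (0 <= C) by (specialize (HC 0); pose proof (Rabs_pos (f 0 - 0)); lra).
destruct (IVT (fun x => f x - y) (y - C - 1) (y + C + 1)) as [x [_ Hx]].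
- intros x; apply continuity_pt_minus; [apply Hf | apply continuity_pt_const; now intros ? ?].
- lra.
- specialize (HC (y - C - 1)); apply Rabs_le_between in HC; lra.
- specialize (HC (y + C + 1)); apply Rabs_le_between in HC; lra.
- exists x; lra.
Qed.

Section PartialFractions.

Variables u v A B D E F : R.
Hypothesis hv : 0 < v.

(* Opposite [x]-coefficients [A] and [-A] make the logarithms of the primitive combine into a
   bounded one. *)
Definition pfrac (x : R) : R :=
  (A * x + B) / (1 + x ^ 2) + (- A * x + D) / ((x - u) ^ 2 + v ^ 2)
  + (E * x + F) / (1 + x ^ 2) ^ 2.

Definition pfrac_prim (x : R) : R :=
  A / 2 * ln ((1 + x ^ 2) / ((x - u) ^ 2 + v ^ 2)) + B * atan x
  + (D - A * u) / v * atan ((x - u) / v) - E / (2 * (1 + x ^ 2))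
  + F / 2 * (x / (1 + x ^ 2) + atan x).

(* [pfrac_prim] written in the variable [t = 1/x]; [c = +-pi/2] is the value of [atan] at [+-oo]. *)
Definition pfrac_prim_inv (c t : R) : R :=
  A / 2 * ln ((t ^ 2 + 1) / ((1 - u * t) ^ 2 + v ^ 2 * t ^ 2)) + B * (c - atan t)
  + (D - A * u) / v * (c - atan (v * t / (1 - u * t))) - E / 2 * (t ^ 2 / (t ^ 2 + 1))
  + F / 2 * (t / (t ^ 2 + 1) + (c - atan t)).

Lemma is_derive_pfrac_prim x : is_derive pfrac_prim x (pfrac x).
Proof.
pose proof (one_add_pow2_pos x).
pose proof (pow2_add_pos (x - u) v hv).
unfold pfrac_prim, pfrac; auto_derive.
- repeat split; try lra. apply Rdiv_lt_0_compat; lra.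
- field; repeat split; lra.
Qed.

Lemma continuous_pfrac_prim_inv c : continuous (pfrac_prim_inv c) 0.
Proof.
apply (@ex_derive_continuous R_AbsRing R_NormedModule).
unfold pfrac_prim_inv; auto_derive.
rewrite !Rmult_0_r, !Rmult_0_l, Ropp_0, !Rplus_0_r, Rplus_0_l, !Rmult_1_r.
repeat split; try lra.
rewrite Rmult_0_r, Rplus_0_r, Rinv_1; lra.
Qed.

Lemma pfrac_prim_eq_inv c x : 0 < x * (x - u) ->
  (forall y, 0 < x * y -> atan y = c - atan (/ y)) ->
  pfrac_prim x = pfrac_prim_inv c (/ x).
Proof.
intros hxu hc.
assert (hx : x <> 0) by (intro; subst; lra).
assert (hx' : x - u <> 0) by (intro H; rewrite H in hxu; lra).
pose proof (one_add_pow2_pos x).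
pose proof (pow2_add_pos (x - u) v hv).
assert (1 - u * / x <> 0).
{ replace (1 - u * / x) with ((x - u) * / x) by (field; lra).
  apply Rmult_integral_contrapositive_currified; [lra | now apply Rinv_neq_0_compat]. }
unfold pfrac_prim, pfrac_prim_inv.
rewrite (hc x), (hc ((x - u) / v)).
- replace (/ ((x - u) / v)) with (v * / x / (1 - u * / x)) by (field; lra).
  replace ((1 + x ^ 2) / ((x - u) ^ 2 + v ^ 2))
    with (((/ x) ^ 2 + 1) / ((1 - u * / x) ^ 2 + v ^ 2 * (/ x) ^ 2))
    by (field; repeat split; lra).
  field; repeat split; lra.
- unfold Rdiv; rewrite <- Rmult_assoc; apply Rmult_lt_0_compat; [lra | now apply Rinv_0_lt_compat].
- nra.
Qed.

Lemma filterlim_pfrac_prim_p_infty :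
  filterlim pfrac_prim (Rbar_locally p_infty) (locally (pfrac_prim_inv (PI / 2) 0)).
Proof.
apply filterlim_p_infty_inv with (M := Rabs u); [|apply continuous_pfrac_prim_inv].
intros x Hx.
pose proof (Rle_abs u); pose proof (Rabs_pos u).
apply pfrac_prim_eq_inv; [nra|].
intros y Hy; apply atan_inv_pos; nra.
Qed.

Lemma filterlim_pfrac_prim_m_infty :
  filterlim pfrac_prim (Rbar_locally m_infty) (locally (pfrac_prim_inv (- (PI / 2)) 0)).
Proof.
apply filterlim_m_infty_inv with (M := - Rabs u); [|apply continuous_pfrac_prim_inv].
intros x Hx.
pose proof (Rle_abs (- u)); rewrite Rabs_Ropp in *; pose proof (Rabs_pos u).
apply pfrac_prim_eq_inv; [nra|].
intros y Hy; apply atan_inv_neg; nra.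
Qed.

Lemma is_RInt_gen_pfrac :
  is_RInt_gen pfrac (Rbar_locally m_infty) (Rbar_locally p_infty)
    (PI * (B + (D - A * u) / v) + F * PI / 2).
Proof.
replace (PI * (B + (D - A * u) / v) + F * PI / 2)
  with (pfrac_prim_inv (PI / 2) 0 - pfrac_prim_inv (- (PI / 2)) 0).
2: { unfold pfrac_prim_inv; rewrite Rmult_0_r, !Rdiv_0_l, atan_0; field; lra. }
apply is_RInt_gen_ext with (Derive pfrac_prim).
- apply filter_forall; intros _ x _; apply is_derive_unique, is_derive_pfrac_prim.
- apply is_RInt_gen_Derive.
  + apply filter_forall; intros _ x _; eexists; apply is_derive_pfrac_prim.
  + apply filter_forall; intros _ x _.
    apply continuous_ext with pfrac.
    { intro y; symmetry; apply is_derive_unique, is_derive_pfrac_prim. }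
    apply (@ex_derive_continuous R_AbsRing R_NormedModule).
    pose proof (one_add_pow2_pos x).
    pose proof (pow2_add_pos (x - u) v hv).
    unfold pfrac; auto_derive; repeat split; try lra; nra.
  + apply filterlim_pfrac_prim_m_infty.
  + apply filterlim_pfrac_prim_p_infty.
Qed.

End PartialFractions.

Lemma mu_int_pfrac (g : R -> R) u v A B D E F : 0 < v ->
  (forall x, g x * cauchy_density x = / PI * pfrac u v A B D E F x) ->
  mu_int g = / PI * (PI * (B + (D - A * u) / v) + F * PI / 2).
Proof.
intros hv Hg. unfold mu_int.
apply (is_RInt_gen_unique (Fa := Rbar_locally m_infty) (Fb := Rbar_locally p_infty)).
apply (is_RInt_gen_ext (Fa := Rbar_locally m_infty) (Fb := Rbar_locally p_infty)
         (fun x => scal (/ PI) (pfrac u v A B D E F x))).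
- apply filter_forall; intros _ x _; rewrite Hg; reflexivity.
- exact (is_RInt_gen_scal (Fa := Rbar_locally m_infty) (Fb := Rbar_locally p_infty)
    _ (/ PI) _ (is_RInt_gen_pfrac u v A B D E F hv)).
Qed.

(* The Cauchy transform of [mu] is [z |-> 1 / (z + i)] on the upper half plane; the right-hand
   side combines its real and imaginary parts at [z = u + i v]. *)
Lemma mu_int_poisson (g : R -> R) u v p q : 0 < v ->
  (forall x, g x = (p * x + q) / ((u - x) ^ 2 + v ^ 2)) ->
  mu_int g = (p * u + q * (1 + v)) / (v * (u ^ 2 + (1 + v) ^ 2)).
Proof.
intros hv Hg. pose proof PI_RGT_0.
pose proof (pow2_add_pos u (1 + v) ltac:(lra)).
(* The two quadratic factors of the denominator coincide iff [u = 0] and [v = 1]. *)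
destruct (Req_dec (u ^ 2 + (1 - v) ^ 2) 0) as [Hdeg | Hdeg].
- assert (u = 0 /\ v = 1) as [-> ->]
    by (pose proof (pow2_ge_0 u); pose proof (pow2_ge_0 (1 - v)); split; nra).
  rewrite (mu_int_pfrac g 0 1 0 0 0 p q); [field; lra | lra |].
  intros x; rewrite Hg; unfold pfrac, cauchy_density.
  pose proof (one_add_pow2_pos x).
  field; lra.
- set (w := u ^ 2 + v ^ 2).
  set (A := (p * (w - 1) + 2 * u * q) / ((w - 1) ^ 2 + 4 * u ^ 2)).
  set (B := ((w - 1) * q - 2 * u * p) / ((w - 1) ^ 2 + 4 * u ^ 2)).
  assert (Hd : (w - 1) ^ 2 + 4 * u ^ 2 = (u ^ 2 + (1 + v) ^ 2) * (u ^ 2 + (1 - v) ^ 2))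
    by (unfold w; ring).
  assert ((w - 1) ^ 2 + 4 * u ^ 2 <> 0)
    by (rewrite Hd; apply Rmult_integral_contrapositive_currified; lra).
  rewrite (mu_int_pfrac g u v A B (2 * u * A - B) 0 0); [| lra |].
  + unfold A, B, w in *; field; repeat split; lra.
  + intros x; rewrite Hg; unfold pfrac, cauchy_density, A, B.
    pose proof (one_add_pow2_pos x).
    pose proof (pow2_add_pos (x - u) v hv).
    unfold w in *; field; repeat split; lra.
Qed.

Definition vs_cubic (s u v : R) : R := v * (u ^ 2 + (1 + v) ^ 2) - s * (1 + v).

Lemma vs_cubic_factor s u r v : 0 < r -> vs_cubic s u r = 0 ->
  vs_cubic s u v = (v - r) * (v * (v + r + 2) + s / r).
Proof.
intros hr Hr; unfold vs_cubic in *.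
replace (u ^ 2) with (s * (1 + r) / r - (1 + r) ^ 2).
- field; lra.
- apply (Rmult_eq_reg_l r); [field_simplify; lra | lra].
Qed.

Lemma vs_cubic_root s u : 0 < s -> exists r, 0 < r /\ vs_cubic s u r = 0.
Proof.
intros hs.
destruct (IVT (vs_cubic s u) 0 s) as [r [[hr0 _] Hr]].
- intros x; apply continuity_pt_filterlim, (@ex_derive_continuous R_AbsRing R_NormedModule).
  unfold vs_cubic; auto_derive; exact I.
- exact hs.
- unfold vs_cubic; lra.
- unfold vs_cubic; pose proof (pow2_ge_0 u); nra.
- exists r; split; [|exact Hr].
  destruct hr0 as [hr0 | <-]; [exact hr0 |]; unfold vs_cubic in Hr; lra.
Qed.

Lemma mu_int_kernel u v : 0 < v ->
  mu_int (fun x => / ((u - x) ^ 2 + v ^ 2)) = (1 + v) / (v * (u ^ 2 + (1 + v) ^ 2)).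
Proof.
intros hv; rewrite (mu_int_poisson _ u v 0 1 hv); [f_equal; ring |].
intros x; unfold Rdiv; ring.
Qed.

Lemma mu_int_kernel_le_iff s u v : 0 < s -> 0 < v ->
  mu_int (fun x => / ((u - x) ^ 2 + v ^ 2)) <= / s <-> 0 <= vs_cubic s u v.
Proof.
intros hs hv; rewrite mu_int_kernel by exact hv.
pose proof (pow2_add_pos u (1 + v) ltac:(lra)).
set (P := v * (u ^ 2 + (1 + v) ^ 2)).
assert (hP : 0 < P) by (apply Rmult_lt_0_compat; lra).
assert (Hl : (1 + v) / P * (s * P) = s * (1 + v)) by (field; lra).
assert (Hr : / s * (s * P) = P) by (field; lra).
unfold vs_cubic; fold P.
split; intros Hle.
- apply (Rmult_le_compat_r (s * P)) in Hle; [lra | nra].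
- apply (Rmult_le_reg_r (s * P)); [nra | lra].
Qed.

Lemma vs_cubic_nonneg_iff s u r v : 0 < s -> 0 < r -> vs_cubic s u r = 0 -> 0 < v ->
  0 <= vs_cubic s u v <-> r <= v.
Proof.
intros hs hr Hr hv; rewrite (vs_cubic_factor s u r v hr Hr).
assert (0 < v * (v + r + 2) + s / r)
  by (assert (0 < s / r) by (apply Rdiv_lt_0_compat; lra); nra).
split; intros Hle; nra.
Qed.

Lemma v_s_eq_root s u r : 0 < s -> 0 < r -> vs_cubic s u r = 0 -> v_s s u = r.
Proof.
intros hs hr Hr; unfold v_s.
assert (Hset : forall v, (0 < v /\ mu_int (fun x => / ((u - x) ^ 2 + v ^ 2)) <= / s)
                         <-> (0 < v /\ r <= v)).
{ intros v; split; intros [hv H]; split; try exact hv.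
  - now apply (vs_cubic_nonneg_iff s u r v), mu_int_kernel_le_iff.
  - now apply mu_int_kernel_le_iff, (vs_cubic_nonneg_iff s u r v). }
rewrite (Glb_Rbar_eqset _ _ Hset), (is_glb_Rbar_unique _ (Finite r)); [reflexivity |].
split.
- intros x [_ hx]; exact hx.
- intros b Hb; apply Hb; lra.
Qed.

Lemma v_s_spec s u : 0 < s -> 0 < v_s s u /\ vs_cubic s u (v_s s u) = 0.
Proof.
intros hs; destruct (vs_cubic_root s u hs) as [r [hr Hr]].
now rewrite (v_s_eq_root s u r).
Qed.

Section VsDerivative.

Variable s : R.
Hypothesis hs : 0 < s.

(* The difference quotient of [v_s], from subtracting the cubic equations at [u0] and [u]. *)
Definition v_s_slope (u0 u : R) : R :=
  - (u + u0) * (v_s s u * v_s s u0) / (s + v_s s u * v_s s u0 * (2 + v_s s u + v_s s u0)).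

Lemma v_s_sub u0 u : v_s s u - v_s s u0 = (u - u0) * v_s_slope u0 u.
Proof.
unfold v_s_slope.
destruct (v_s_spec s u hs) as [hV HV], (v_s_spec s u0 hs) as [hV0 HV0].
set (V := v_s s u) in *; set (V0 := v_s s u0) in *; clearbody V V0.
unfold vs_cubic in HV, HV0.
assert (E : V * u ^ 2 = s * (1 + V) - V * (1 + V) ^ 2) by lra.
assert (E0 : V0 * u0 ^ 2 = s * (1 + V0) - V0 * (1 + V0) ^ 2) by lra.
assert (0 < V * V0 * (2 + V + V0)) by (repeat apply Rmult_lt_0_compat; lra).
assert (Key : (V - V0) * (s + V * V0 * (2 + V + V0))
              = - (V0 * (V * u ^ 2) - V * (V0 * u0 ^ 2))) by (rewrite E, E0; ring).
apply (Rmult_eq_reg_r (s + V * V0 * (2 + V + V0))); [| lra].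
rewrite Key; field; lra.
Qed.

Lemma Rabs_v_s_slope_le u0 u : Rabs (v_s_slope u0 u) <= Rabs (u + u0) / 2.
Proof.
unfold v_s_slope.
destruct (v_s_spec s u hs) as [hV _], (v_s_spec s u0 hs) as [hV0 _].
set (V := v_s s u) in *; set (V0 := v_s s u0) in *; clearbody V V0.
assert (0 < V * V0) by (apply Rmult_lt_0_compat; lra).
set (c := s + V * V0 * (2 + V + V0)).
assert (Hc : 2 * (V * V0) < c) by (unfold c; nra).
assert (Hq : V * V0 / c <= / 2).
{ apply (Rmult_le_reg_r c); [lra |].
  unfold Rdiv; rewrite Rmult_assoc, Rinv_l, Rmult_1_r by lra; lra. }
replace (- (u + u0) * (V * V0) / c) with (- (u + u0) * (V * V0 / c)) by (field; lra).
rewrite Rabs_mult, Rabs_Ropp, (Rabs_pos_eq (V * V0 / c))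
  by (apply Rlt_le, Rdiv_lt_0_compat; lra).
pose proof (Rabs_pos (u + u0)); nra.
Qed.

Lemma continuity_pt_v_s u0 : continuity_pt (v_s s) u0.
Proof.
apply continuity_pt_of_abs_le with (fun u => Rabs (u - u0) * (Rabs (u + u0) / 2)).
- intros u; rewrite v_s_sub, Rabs_mult.
  apply Rmult_le_compat_l; [apply Rabs_pos | apply Rabs_v_s_slope_le].
- reg.
- rewrite Rminus_diag, Rabs_R0; ring.
Qed.

Lemma is_derive_v_s u0 : is_derive (v_s s) u0 (v_s_slope u0 u0).
Proof.
apply is_derive_of_slope; [apply v_s_sub |].
destruct (v_s_spec s u0 hs) as [hV0 _].
unfold v_s_slope; reg; [apply continuity_pt_v_s |].
assert (0 < v_s s u0 * v_s s u0 * (2 + v_s s u0 + v_s s u0))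
  by (repeat apply Rmult_lt_0_compat; lra).
lra.
Qed.

Definition G_s (u : R) : R := u / (u ^ 2 + (1 + v_s s u) ^ 2).

Definition G_s_deriv (v : R) : R :=
  v * (- s + 2 * v * (1 + v) ^ 2) / (s * (1 + v) * (s + 2 * v ^ 2 * (1 + v))).

Lemma G_int_v_s u : G_int u (v_s s u) = G_s u.
Proof.
destruct (v_s_spec s u hs) as [hV _].
unfold G_int, G_s; rewrite (mu_int_poisson _ u (v_s s u) (-1) u hV).
- pose proof (pow2_add_pos u (1 + v_s s u) ltac:(lra)); field; lra.
- intros x; f_equal; ring.
Qed.

Lemma is_derive_G_s u : is_derive G_s u (G_s_deriv (v_s s u)).
Proof.
destruct (v_s_spec s u hs) as [hV HV].
pose proof (pow2_add_pos u (1 + v_s s u) ltac:(lra)).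
unfold G_s; auto_derive.
- split; [eexists; apply is_derive_v_s | simpl in *; lra].
- replace (Derive (fun x => v_s s x) u) with (v_s_slope u u)
    by (symmetry; apply is_derive_unique, is_derive_v_s).
  unfold v_s_slope, G_s_deriv.
  set (V := v_s s u) in *; clearbody V; unfold vs_cubic in HV.
  assert (Hs : s = V * (u ^ 2 + (1 + V) ^ 2) / (1 + V)).
  { apply (Rmult_eq_reg_r (1 + V)); [field_simplify |]; lra. }
  assert (0 < V * (u ^ 2 + (1 + V) ^ 2) / (1 + V)) by (rewrite <- Hs; exact hs).
  assert (0 < V * V * (2 + V + V)) by (repeat apply Rmult_lt_0_compat; lra).
  assert (0 < V * (u ^ 2 + (1 + V) ^ 2)) by (apply Rmult_lt_0_compat; lra).
  assert (0 < 2 * V ^ 2 * (1 + V) * (1 + V)) by (repeat apply Rmult_lt_0_compat; lra).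
  rewrite Hs; field; simpl in *; repeat split; lra.
Qed.

Lemma Rabs_G_s_le u : Rabs (G_s u) <= / 2.
Proof.
destruct (v_s_spec s u hs) as [hV _].
assert (1 <= (1 + v_s s u) ^ 2) by nra.
unfold G_s; rewrite Rabs_div, (Rabs_pos_eq (_ + _)) by nra.
apply (Rmult_le_reg_r (u ^ 2 + (1 + v_s s u) ^ 2)); [nra |].
unfold Rdiv; rewrite Rmult_assoc, Rinv_l, Rmult_1_r by nra.
pose proof (pow2_ge_0 (Rabs u - 1)); rewrite <- (pow2_abs u); nra.
Qed.

End VsDerivative.

Section Fab.

Variables a b : R.
Hypotheses (ha : 0 <= a) (hb : 0 < b).

Let s := a + b.

Let hs : 0 < s.
Proof. unfold s; lra. Qed.

Definition f_ab_deriv (u : R) : R := 1 + (a - b) * G_s_deriv s (v_s s u).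

Lemma f_ab_G_s u : f_ab a b u = u + (a - b) * G_s s u.
Proof. unfold f_ab; fold s; rewrite G_int_v_s by exact hs; reflexivity. Qed.

Lemma is_derive_f_ab u : is_derive (f_ab a b) u (f_ab_deriv u).
Proof.
apply is_derive_ext with (fun t => t + (a - b) * G_s s t).
{ intros t; symmetry; apply f_ab_G_s. }
exact (is_derive_plus _ _ _ _ _ (is_derive_id u)
         (is_derive_scal _ _ (a - b) _ (is_derive_G_s s hs u))).
Qed.

Definition f_ab_deriv_num (v : R) : R :=
  (1 + v) * (s ^ 2 + 4 * a * v ^ 2 * (1 + v)) - (a - b) * s * v.

Lemma f_ab_deriv_num_pos v : 0 < v -> 0 < f_ab_deriv_num v.
Proof.
intros hv; unfold f_ab_deriv_num.
assert (0 <= 4 * a * v ^ 2 * (1 + v) * (1 + v))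
  by (pose proof (pow2_ge_0 v); repeat apply Rmult_le_pos; lra).
assert ((a - b) * s * v < s * s * v)
  by (apply Rmult_lt_compat_r; [lra | apply Rmult_lt_compat_r; unfold s in *; lra]).
nra.
Qed.

Lemma f_ab_deriv_eq u : let v := v_s s u in
  f_ab_deriv u = f_ab_deriv_num v / (s * (1 + v) * (s + 2 * v ^ 2 * (1 + v))).
Proof.
intros v; destruct (v_s_spec s u hs) as [hv _]; fold v in hv.
assert (0 < 2 * v ^ 2 * (1 + v)) by (repeat apply Rmult_lt_0_compat; lra).
unfold f_ab_deriv, f_ab_deriv_num, G_s_deriv; fold v; clearbody v.
unfold s in *; field; repeat split; lra.
Qed.

Lemma f_ab_deriv_pos u : 0 < f_ab_deriv u.
Proof.
destruct (v_s_spec s u hs) as [hv _].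
rewrite f_ab_deriv_eq; apply Rdiv_lt_0_compat; [now apply f_ab_deriv_num_pos |].
assert (0 < 2 * v_s s u ^ 2 * (1 + v_s s u)) by (repeat apply Rmult_lt_0_compat; lra).
repeat apply Rmult_lt_0_compat; lra.
Qed.

Lemma f_ab_increasing x y : x < y -> f_ab a b x < f_ab a b y.
Proof.
intros hxy.
apply (incr_function (f_ab a b) m_infty p_infty f_ab_deriv); try exact I; try exact hxy.
- intros t _ _; apply is_derive_f_ab.
- intros t _ _; apply f_ab_deriv_pos.
Qed.

Lemma f_ab_inj x y : f_ab a b x = f_ab a b y -> x = y.
Proof.
intros Hxy; destruct (Rtotal_order x y) as [Hlt | [Heq | Hgt]]; [| exact Heq |].
- apply f_ab_increasing in Hlt; lra.
- apply f_ab_increasing in Hgt; lra.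
Qed.

Lemma continuity_f_ab : continuity (f_ab a b).
Proof.
intros x; apply continuity_pt_filterlim, (@ex_derive_continuous R_AbsRing R_NormedModule).
eexists; apply is_derive_f_ab.
Qed.

Lemma Rabs_f_ab_sub_le u : Rabs (f_ab a b u - u) <= Rabs (a - b) / 2.
Proof.
rewrite f_ab_G_s; replace (u + (a - b) * G_s s u - u) with ((a - b) * G_s s u) by ring.
rewrite Rabs_mult; pose proof (Rabs_pos (a - b)); pose proof (Rabs_G_s_le s hs u); nra.
Qed.

Lemma G_s_deriv_over_f_ab_deriv u : let v := v_s s u in
  / f_ab_deriv u * G_s_deriv s v = v * (- s + 2 * v * (1 + v) ^ 2) / f_ab_deriv_num v.
Proof.
intros v; destruct (v_s_spec s u hs) as [hv _]; fold v in hv.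
pose proof (f_ab_deriv_num_pos v hv).
assert (0 < 2 * v ^ 2 * (1 + v)) by (repeat apply Rmult_lt_0_compat; lra).
rewrite f_ab_deriv_eq; fold v; unfold G_s_deriv; clearbody v.
unfold s in *; field; repeat split; lra.
Qed.

End Fab.

Theorem lemma6p8 (alpha beta s u0 : R)
  (halpha : 0 <= alpha) (hbeta : 0 < beta) (hs : s = alpha + beta) :
  (exists phi : R -> R, forall u, f_ab alpha beta (phi u) = u) /\
  forall phi : R -> R, (forall u, f_ab alpha beta (phi u) = u) ->
    let v := v_s s u0 in
    is_derive (fun u => G_int (phi u) (v_s s (phi u))) (f_ab alpha beta u0)
      (v * (- s + 2 * v * (1 + v) ^ 2) /
       ((1 + v) * (s ^ 2 + 4 * alpha * v ^ 2 * (1 + v)) - (alpha - beta) * s * v)).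
Proof.
subst s; assert (hs : 0 < alpha + beta) by lra; split.
- exists (fun y => proj1_sig (preimage_of_bounded_shift _ _
                                (continuity_f_ab alpha beta halpha hbeta)
                                (Rabs_f_ab_sub_le alpha beta halpha hbeta) y)).
  intros y; apply proj2_sig.
- intros phi Hphi; cbv zeta.
  set (y0 := f_ab alpha beta u0).
  assert (Hphi0 : phi y0 = u0)
    by (apply (f_ab_inj alpha beta halpha hbeta); rewrite Hphi; reflexivity).
  assert (Hphi' := is_derive_inverse _ phi _ y0 (is_derive_f_ab alpha beta halpha hbeta)
                     (f_ab_increasing alpha beta halpha hbeta) Hphi
                     (Rgt_not_eq _ _ (f_ab_deriv_pos alpha beta halpha hbeta (phi y0)))).
  assert (HG : is_derive (G_s (alpha + beta)) (phi y0)
                         (G_s_deriv (alpha + beta) (v_s (alpha + beta) u0)))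
    by (rewrite Hphi0; apply is_derive_G_s, hs).
  apply is_derive_ext with (fun u => G_s (alpha + beta) (phi u)).
  { intros u; symmetry; apply G_int_v_s, hs. }
  pose proof (G_s_deriv_over_f_ab_deriv alpha beta halpha hbeta u0) as Hval.
  unfold f_ab_deriv_num in Hval; rewrite <- Hval; rewrite Hphi0 in Hphi'.
  exact (is_derive_comp _ _ _ _ _ HG Hphi').
Qed.
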